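(* Let $3\le p\le q<\omega$, $0\le n<\omega$, and $0\le i,j\le p$ with $i\ne j$. Then $\mathfrak L^{ij}(p,n)$ is isomorphic to a subalgebra of $\mathfrak L(q,n)$.
   Context: For $3\le p<\omega$, $0\le n<\omega$, $\mathfrak L(p,n)$ is the finite symmetric (i.e. $\breve x=x$ for all $x$) integral (i.e. $1'$ is an atom) relation algebra with atoms $1',a_0,\dots,a_p,t_1,\dots,t_n$ whose composition of atoms is given, for $0\le i,j\le p$, $i\ne j$, $1\le k,l\le n$, $k\ne l$, by: $a_i;a_i=1'+a_i$; $a_i;a_j=0'\cdot\overline{a_i+a_j}$ (where $0'=\overline{1'}$); $a_i;t_k=t_1+\cdots+t_n$; $t_k;t_k=1'+a_0+\cdots+a_p$; $t_k;t_l=a_0+\cdots+a_p$ (and composition with $1'$ is the identity). For $0\le i,j\le p$, $i\ne j$, $\mathfrak L^{ij}(p,n)$ is the subalgebra of $\mathfrak L(p,n)$ whose atoms are $1'$, $a_i+a_j$, the $a_k$ for $0\le k\le p$ with $k\ne i,j$, and $t_1,\dots,t_n$. *)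

From HB Require Import structures.
From mathcomp Require Import all_boot.
Set Implicit Arguments. Unset Strict Implicit. Unset Printing Implicit Defensive.

(* Atoms of L(p,n):  None = 1' ,  Some (inl i) = a_i (0 <= i <= p),
   Some (inr k) = t_{k+1} (0 <= k < n). *)
Definition atom (p n : nat) : finType := option ('I_p.+1 + 'I_n)%type.

Definition idA {p n : nat} : atom p n := None.
Definition aA {p n : nat} (i : 'I_p.+1) : atom p n := Some (inl i).
Definition tA {p n : nat} (k : 'I_n) : atom p n := Some (inr k).

Definition allA (p n : nat) : {set atom p n} := [set aA i | i : 'I_p.+1].
Definition allT (p n : nat) : {set atom p n} := [set tA k | k : 'I_n].

(* composition of atoms (symmetric: t_k;a_i = (a_i;t_k)^~ = a_i;t_k) *)
Definition comp_atom (p n : nat) (x y : atom p n) : {set atom p n} :=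
  match x, y with
  | None, _ => [set y]
  | _, None => [set x]
  | Some (inl i), Some (inl j) =>
      if i == j then [set idA; aA i]
      else ~: [set idA; aA i; aA j]
  | Some (inl _), Some (inr _) => allT p n
  | Some (inr _), Some (inl _) => allT p n
  | Some (inr k), Some (inr l) =>
      if k == l then idA |: allA p n else allA p n
  end.

Definition Lcomp (p n : nat) (X Y : {set atom p n}) : {set atom p n} :=
  \bigcup_(x in X) \bigcup_(y in Y) comp_atom x y.
Definition Lconv (p n : nat) (X : {set atom p n}) : {set atom p n} := X.
Definition Lid (p n : nat) : {set atom p n} := [set idA].

Definition is_subalgebra (p n : nat) (S : pred {set atom p n}) : Prop :=
  [/\ S (Lid p n),
      (forall X Y, S X -> S Y -> S (X :|: Y)),
      (forall X, S X -> S (~: X)),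
      (forall X Y, S X -> S Y -> S (Lcomp X Y)) &
      (forall X, S X -> S (Lconv X))].

(* Atoms of L^{ij}(p,n): 1', a_i + a_j, a_k (k <> i,j), t_1..t_n. *)
Definition Lij_atoms (p n : nat) (i j : 'I_p.+1) : {set {set atom p n}} :=
  [set [set aA i; aA j]] :|:
  [set [set x] | x in ~: [set aA i; aA j]].

Definition Lij (p n : nat) (i j : 'I_p.+1) : pred {set atom p n} :=
  fun X => [exists A : {set {set atom p n}},
              (A \subset @Lij_atoms p n i j) && (X == \bigcup_(B in A) B)].

Definition is_iso_between (p q n : nat)
    (S1 : pred {set atom p n}) (S2 : pred {set atom q n})
    (f : {set atom p n} -> {set atom q n}) : Prop :=
  (forall X, S1 X -> S2 (f X)) /\
  (forall X Y, S1 X -> S1 Y -> f X = f Y -> X = Y) /\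
  (forall Y, S2 Y -> exists2 X, S1 X & f X = Y) /\
  f (Lid p n) = Lid q n /\
  (forall X Y, S1 X -> S1 Y -> f (X :|: Y) = f X :|: f Y) /\
  (forall X, S1 X -> f (~: X) = ~: f X) /\
  (forall X Y, S1 X -> S1 Y -> f (Lcomp X Y) = Lcomp (f X) (f Y)) /\
  (forall X, S1 X -> f (Lconv X) = Lconv (f X)).

From Pilot Require Import Defs.
From mathcomp Require Import all_boot zify.
Set Implicit Arguments. Unset Strict Implicit. Unset Printing Implicit Defensive.

(* L^{ij}(p,n) embeds into L(q,n) by splitting its atom a_i + a_j.  Let h
   collapse the atoms of L(q,n) onto those of L(p,n), sending a_m to a_i
   when m is i, j or exceeds p and keeping all other atoms; the embedding
   maps X to its preimage under h.  Preimages commute with the Boolean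
   operations.  For composition we call a set of atoms of L(p,n) saturated
   when it does not separate a_i from a_j (these are exactly the elements of
   L^{ij}(p,n)) and show that h lifts and descends every atomic composition
   triple up to this identification (a bounded-morphism property); then
   preimages of saturated sets commute with composition.  For q = p the map
   h is the identification itself, which shows that L^{ij}(p,n) is closed
   under composition.  The theorem follows because the image of a
   subalgebra under an injective operation-preserving map is a subalgebra
   isomorphic to it. *)

Lemma mem_Lcomp r n (X Y : {set atom r n}) z :
  reflect (exists x y, [/\ x \in X, y \in Y & z \in comp_atom x y])
          (z \in Lcomp X Y).
Proof.
apply: (iffP bigcupP) => [[x Hx /bigcupP [y Hy Hz]]|[x [y [Hx Hy Hz]]]].
  by exists x, y.
by exists x => //; apply/bigcupP; exists y.
Qed.

Section AtomTable.
Variables r n : nat.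
Implicit Types a b c : 'I_r.+1.

Lemma id_comp_aa a b : (idA \in comp_atom (@aA r n a) (aA b)) = (a == b).
Proof. by rewrite /=; case: eqP; rewrite !inE. Qed.

Lemma t_comp_aa a b k : (tA k \in comp_atom (@aA r n a) (aA b)) = (a != b).
Proof. by rewrite /=; case: eqP; rewrite !inE. Qed.

Lemma a_comp_aa a b c : (aA c \in comp_atom (@aA r n a) (aA b)) =
  if a == b then c == a else (c != a) && (c != b).
Proof. by rewrite /=; case: eqP; rewrite !inE //= negb_or. Qed.

Lemma comp_id_r x : comp_atom x (@idA r n) = [set x].
Proof. by case: x => [[]|]. Qed.

Lemma mem_allA (z : atom r n) :
  (z \in allA r n) = if z is Some (inl _) then true else false.
Proof. by case: z => [[a|k]|]; apply/imsetP; [exists a | case.. ]. Qed.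

Lemma mem_allT (z : atom r n) :
  (z \in Defs.allT r n) = if z is Some (inr _) then true else false.
Proof. by case: z => [[a|k]|]; apply/imsetP; [case | exists k | case]. Qed.

End AtomTable.

Section Saturation.
Variables (r n : nat) (rep : atom r n -> atom r n).

Definition saturated (X : {set atom r n}) : Prop :=
  forall x, (rep x \in X) = (x \in X).

Lemma saturated_eq X x y : saturated X -> rep x = rep y -> (x \in X) = (y \in X).
Proof. by move=> satX Exy; rewrite -satX Exy satX. Qed.

Lemma saturatedU X Y : saturated X -> saturated Y -> saturated (X :|: Y).
Proof. by move=> satX satY x; rewrite !inE satX satY. Qed.

Lemma saturatedC X : saturated X -> saturated (~: X).
Proof. by move=> satX x; rewrite !inE satX. Qed.

End Saturation.

Section Preimage.
Variables (s r n : nat) (h : atom s n -> atom r n) (rep : atom r n -> atom r n).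

Hypothesis lift : forall x' y' z, z \in comp_atom x' y' ->
  exists x y, [/\ rep x = rep (h x'), rep y = rep (h y') & h z \in comp_atom x y].
Hypothesis descend : forall x y z, h z \in comp_atom x y ->
  exists x' y', [/\ rep (h x') = rep x, rep (h y') = rep y & z \in comp_atom x' y'].

Lemma preim_Lcomp X Y : saturated rep X -> saturated rep Y ->
  h @^-1: Lcomp X Y = Lcomp (h @^-1: X) (h @^-1: Y).
Proof.
move=> satX satY; apply/setP => z; rewrite inE.
apply/mem_Lcomp/mem_Lcomp => -[x [y [Hx Hy Hz]]].
  have [x' [y' [Ex Ey Hz']]] := descend Hz.
  by exists x', y'; rewrite !inE (saturated_eq satX Ex) (saturated_eq satY Ey).
have [x0 [y0 [Ex Ey Hz']]] := lift Hz; rewrite !inE in Hx Hy.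
by exists x0, y0; rewrite (saturated_eq satX Ex) (saturated_eq satY Ey).
Qed.

End Preimage.

Lemma preim_inj s r n (h : atom s n -> atom r n) (rep : atom r n -> atom r n)
    (onto : forall x, exists x', rep (h x') = rep x) X Y :
  saturated rep X -> saturated rep Y -> h @^-1: X = h @^-1: Y -> X = Y.
Proof.
move=> satX satY EXY; apply/setP => x; have [x' Ex] := onto x.
move/setP/(_ x'): EXY; rewrite !inE.
by rewrite (saturated_eq satX Ex) (saturated_eq satY Ex).
Qed.

(* Applying preim_Lcomp to rep itself: saturated sets are closed under
   composition as soon as rep satisfies the lifting conditions. *)
Lemma saturatedLcomp r n (rep : atom r n -> atom r n)
  (lift : forall x' y' z, z \in comp_atom x' y' ->
     exists x y, [/\ rep x = rep (rep x'), rep y = rep (rep y') & rep z \in comp_atom x y])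
  (descend : forall x y z, rep z \in comp_atom x y ->
     exists x' y', [/\ rep (rep x') = rep x, rep (rep y') = rep y & z \in comp_atom x' y'])
  X Y : saturated rep X -> saturated rep Y -> saturated rep (Lcomp X Y).
Proof.
move=> satX satY; have fix_sat Z : saturated rep Z -> rep @^-1: Z = Z.
  by move=> satZ; apply/setP => z; rewrite inE satZ.
move=> z; have := preim_Lcomp lift descend satX satY.
by rewrite !(fix_sat X, fix_sat Y) //; move/setP/(_ z); rewrite inE.
Qed.

Lemma iso_onto_image p q n (S1 : pred {set atom p n})
    (f : {set atom p n} -> {set atom q n}) :
  is_subalgebra S1 ->
  (forall X Y, S1 X -> S1 Y -> f X = f Y -> X = Y) ->
  f (Lid p n) = Lid q n ->
  (forall X Y, S1 X -> S1 Y -> f (X :|: Y) = f X :|: f Y) ->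
  (forall X, S1 X -> f (~: X) = ~: f X) ->
  (forall X Y, S1 X -> S1 Y -> f (Lcomp X Y) = Lcomp (f X) (f Y)) ->
  exists S, is_subalgebra S /\ is_iso_between S1 S f.
Proof.
move=> [S1id S1U S1C S1comp _] f_inj f_id fU fC fcomp.
pose S := fun Y => [exists X, S1 X && (f X == Y)].
have SP X : S1 X -> S (f X) by move=> S1X; apply/existsP; exists X; rewrite S1X eqxx.
have imP Y : S Y -> exists2 X, S1 X & f X = Y.
  by case/existsP=> X /andP[S1X /eqP <-]; exists X.
exists S; split.
  split=> // [|Y1 Y2 /imP[X1 S1X1 <-] /imP[X2 S1X2 <-]|Y /imP[X S1X <-]|
              Y1 Y2 /imP[X1 S1X1 <-] /imP[X2 S1X2 <-]].
  - by rewrite -f_id; apply: SP.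
  - by rewrite -fU //; apply: SP; apply: S1U.
  - by rewrite -fC //; apply: SP; apply: S1C.
  - by rewrite -fcomp //; apply: SP; apply: S1comp.
by do !split=> //; apply: imP.
Qed.

Section Collapse.
Variables (p n : nat) (i j : 'I_p.+1).

Definition collapsed q (m : 'I_q.+1) : bool :=
  [|| val m == val i, val m == val j | p < m].

Definition collapse_idx q (m : 'I_q.+1) : 'I_p.+1 :=
  if collapsed m then i else inord m.

(* The collapse map h from the atoms of L(q,n) to those of L(p,n); for
   q = p it is the representative map of the identification a_i ~ a_j. *)
Definition collapse q (z : atom q n) : atom p n :=
  match z with
  | Some (inl m) => aA (collapse_idx m)
  | Some (inr k) => tA k
  | None => idA
  end.

Local Notation ridx := (@collapse_idx p).
Local Notation rep := (@collapse p).

Lemma val_collapse_idx q (m : 'I_q.+1) :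
  val (collapse_idx m) = if collapsed m then val i else val m.
Proof.
by rewrite /collapse_idx; case: ifP => // /norP[_ /norP[_]]; rewrite -leqNgt => /inordK.
Qed.

Lemma ridxE a : ridx a = if a == j then i else a.
Proof.
apply: val_inj; rewrite val_collapse_idx /collapsed (ltn_geF (ltn_ord a)) orbF.
case: (a =P j) => [-> | /eqP Naj]; first by rewrite eqxx orbT.
by case: (val a =P val i) => [-> //|]; rewrite val_eqE (negbTE Naj).
Qed.

Lemma ridx_collapse_idx q (m : 'I_q.+1) : ridx (collapse_idx m) = collapse_idx m.
Proof.
rewrite ridxE; case: eqP => // Ej; apply: val_inj.
by move: (congr1 val Ej); rewrite val_collapse_idx; case: ifP => //= /norP[_ /norP[/eqP]].
Qed.

Lemma rep_collapse q (z : atom q n) : rep (collapse z) = collapse z.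
Proof. by case: z => [[m|k]|] //=; rewrite ridx_collapse_idx. Qed.

End Collapse.

Section IndexCombinatorics.
Variables (p : nat) (i j : 'I_p.+1).
Hypothesis ij : i != j.
Local Notation cidx := (collapse_idx i j).
Local Notation ridx := (@collapse_idx p i j p).

(* Routine index arithmetic: pass to values, split on every [if] (in
   particular on every [collapsed] test) and conclude by [lia]. *)
Ltac idx_norm := rewrite -?val_eqE /=; repeat rewrite ?val_collapse_idx /collapsed /=.

Ltac idx_lia :=
  try apply: val_inj;
  move: (ltn_ord i) (ltn_ord j) ij;
  repeat match goal with
  | H : is_true (_ != _) |- _ => revert H
  | H : is_true (_ == _) |- _ => revert H
  | H : collapsed _ _ _ = _ |- _ => revert H
  end;
  idx_norm; repeat (case: ifP; let H := fresh in move=> H; move: H; idx_norm);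
  lia.

(* The class of a collapsed index is {i, j}: two distinct indices upstairs
   have representatives of distinct indices downstairs. *)
Lemma lift_idx_distinct q (m l : 'I_q.+1) : m != l ->
  exists a b, [/\ ridx a = cidx m, ridx b = cidx l & a != b].
Proof.
move=> Nml; exists (cidx m), (if collapsed i j m && collapsed i j l then j else cidx l).
by split; idx_lia.
Qed.

Lemma lift_idx_avoid q (m l c : 'I_q.+1) : m != l -> c != m -> c != l ->
  exists a b, [/\ ridx a = cidx m, ridx b = cidx l &
                  if a == b then cidx c == a else (cidx c != a) && (cidx c != b)].
Proof.
move=> Nml Ncm Ncl.
case Cm: (collapsed i j m); case Cl: (collapsed i j l); case Cc: (collapsed i j c).
- by exists i, i; split; idx_lia.
- by exists i, j; split; idx_lia.
- by exists j, (cidx l); split; idx_lia.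
- by exists i, (cidx l); split; idx_lia.
- by exists (cidx m), j; split; idx_lia.
- by exists (cidx m), i; split; idx_lia.
- by exists (cidx m), (cidx l); split; idx_lia.
- by exists (cidx m), (cidx l); split; idx_lia.
Qed.

Section Widen.
Variable q : nat.
Hypothesis pq : p <= q.

Definition widen_idx (a : 'I_p.+1) : 'I_q.+1 := widen_ord (pq : p.+1 <= q.+1) a.

Lemma widen_idx_eq a b : (widen_idx a == widen_idx b) = (a == b).
Proof. by []. Qed.

(* Descending a triple a_c in a_a;a_b (c not collapsed onto a or b):
   widen a and b, replacing a widened index that hits c by i. *)
Lemma descend_idx_avoid (a b : 'I_p.+1) (c : 'I_q.+1) :
  a != b -> cidx c != a -> cidx c != b ->
  exists m l, [/\ cidx m = ridx a, cidx l = ridx b, m != l, c != m & c != l].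
Proof.
move=> Nab Nca Ncb; move: (ltn_ord a) (ltn_ord b) => lta ltb.
exists (if c == widen_idx a then widen_idx i else widen_idx a).
exists (if c == widen_idx b then widen_idx i else widen_idx b).
by split; idx_lia.
Qed.

End Widen.
End IndexCombinatorics.

Section Lift.
Variables (p n : nat) (i j : 'I_p.+1).
Hypothesis ij : i != j.
Local Notation rep := (@collapse p n i j p).

Lemma collapse_lift q (x' y' : atom q n) z : z \in comp_atom x' y' ->
  exists x y, [/\ rep x = rep (collapse i j x'), rep y = rep (collapse i j y') &
                  collapse i j z \in comp_atom x y].
Proof.
rewrite !rep_collapse => Hz.
suff [Hc|[m [l [Ex El Nml]]]] :
    collapse i j z \in comp_atom (collapse i j x') (collapse i j y') \/
    exists m l, [/\ x' = aA m, y' = aA l & m != l].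
- by exists (collapse i j x'), (collapse i j y'); rewrite !rep_collapse.
- move: Hz; rewrite {}Ex {}El; case: z => [[c|k]|];
    rewrite ?id_comp_aa ?t_comp_aa ?a_comp_aa (negbTE Nml) //.
    case/andP => Ncm Ncl.
    have [a [b [Ea Eb Hab]]] := lift_idx_avoid ij Nml Ncm Ncl.
    by exists (aA a), (aA b); rewrite /= Ea Eb a_comp_aa.
  have [a [b [Ea Eb Hab]]] := lift_idx_distinct ij Nml.
  by exists (aA a), (aA b); rewrite /= Ea Eb t_comp_aa.
case: x' y' Hz => [[m|k]|] [[l|k']|] /=.
- case: (m =P l) => [<-|/eqP Nml] Hz; last by right; exists m, l.
  by left; rewrite eqxx; move: Hz; case: z => [[c|k]|]; rewrite !inE //= => /eqP [->].
all: case: z => [[c|k'']|]; rewrite ?inE ?mem_allT ?mem_allA //= => Hz; left; move: Hz.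
all: try case: (k == k'); rewrite ?inE ?mem_allA //.
all: by move/eqP => [->].
Qed.

Section Descend.
Variable q : nat.
Hypothesis pq : p <= q.

Definition embed (x : atom p n) : atom q n :=
  match x with
  | Some (inl a) => aA (widen_idx pq a)
  | Some (inr k) => tA k
  | None => idA
  end.

Lemma collapse_embed x : collapse i j (embed x) = rep x.
Proof. by case: x => [[a|k]|]. Qed.

Lemma collapse_descend (x y : atom p n) (z : atom q n) :
  collapse i j z \in comp_atom x y ->
  exists x' y', [/\ rep (collapse i j x') = rep x, rep (collapse i j y') = rep y &
                    z \in comp_atom x' y'].
Proof.
have by_embed : z \in comp_atom (embed x) (embed y) -> exists x' y',
    [/\ rep (collapse i j x') = rep x, rep (collapse i j y') = rep y &
        z \in comp_atom x' y'].
  by exists (embed x), (embed y); rewrite !collapse_embed !rep_collapse.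
case: x by_embed => [[a|k]|] by_embed; last first.
  by rewrite inE => /eqP Ez; exists idA, z; rewrite /= Ez inE.
all: case: y by_embed => [[b|k']|] by_embed.
all: try by rewrite comp_id_r inE => /eqP Ez; exists z, idA; rewrite comp_id_r Ez inE.
all: try by move=> Hz; apply: by_embed; move: Hz; case: z => [[c|k'']|] /=;
  rewrite ?inE ?mem_allT ?mem_allA //; case: (k == k'); rewrite ?inE ?mem_allA.
case: z by_embed => [[c|k]|] by_embed; rewrite /= ?id_comp_aa ?t_comp_aa ?a_comp_aa.
- case: eqP => [<- /eqP Eca|/eqP Nab /andP[Nca Ncb]].
    by exists (aA c), (aA c); rewrite !rep_collapse /= -Eca ridx_collapse_idx a_comp_aa eqxx.
  have [m [l [Em El Nml Ncm Ncl]]] := descend_idx_avoid ij pq Nab Nca Ncb.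
  by exists (aA m), (aA l); rewrite !rep_collapse /= Em El a_comp_aa (negbTE Nml) Ncm Ncl.
- by move=> Nab; apply: by_embed; rewrite /= t_comp_aa widen_idx_eq.
- by move=> Eab; apply: by_embed; rewrite /= id_comp_aa widen_idx_eq.
Qed.

End Descend.
End Lift.

Section Lij.
Variables (p n : nat) (i j : 'I_p.+1).
Hypothesis ij : i != j.
Local Notation rep := (@collapse p n i j p).

Lemma saturated_glued X : saturated rep X <-> (aA i \in X) = (aA j \in X).
Proof.
split=> [satX|glued [[a|k]|]] //; first by rewrite -(satX (aA j)) /= ridxE eqxx.
by rewrite /= ridxE; case: eqP => [->|].
Qed.

Lemma Lij_atom_glued B : B \in Lij_atoms n i j -> (aA i \in B) = (aA j \in B).
Proof.
case/setUP => [/set1P ->|/imsetP[x]]; first by rewrite !inE !eqxx orbT.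
rewrite !inE negb_or => /andP[Nxi Nxj] ->.
by rewrite !inE !(eq_sym _ x) (negbTE Nxi) (negbTE Nxj).
Qed.

Lemma Lij_saturated X : Lij i j X <-> saturated rep X.
Proof.
rewrite saturated_glued; split.
  case/existsP => A /andP[/subsetP sub /eqP ->].
  apply/bigcupP/bigcupP => -[B HB H]; exists B => //.
    by rewrite -(Lij_atom_glued (sub _ HB)).
  by rewrite (Lij_atom_glued (sub _ HB)).
move=> glued; apply/existsP; exists [set B in Lij_atoms n i j | B \subset X].
apply/andP; split; first by apply/subsetP => B; rewrite inE => /andP[].
apply/eqP/setP => z; apply/idP/bigcupP => [Xz|[B]]; last first.
  by rewrite inE => /andP[_ /subsetP]; apply.
case: (boolP (z \in [set aA i; aA j])) => Hz.
  have [Xi Xj] : aA i \in X /\ aA j \in X.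
    by case/set2P: Hz Xz => -> X_ij; [rewrite -glued | rewrite glued].
  exists [set aA i; aA j] => //; rewrite !inE eqxx /=.
  by apply/subsetP => w /set2P[] ->.
exists [set z]; rewrite ?inE //; apply/andP; split; last by rewrite sub1set.
by apply/orP; right; apply/imsetP; exists z => //; rewrite inE.
Qed.

Lemma Lij_subalgebra : is_subalgebra (@Lij p n i j).
Proof.
split=> [|X Y|X|X Y|X //]; rewrite ?Lij_saturated.
- by apply/saturated_glued; rewrite !inE.
- exact: saturatedU.
- exact: saturatedC.
- apply: saturatedLcomp; [exact: collapse_lift | exact: (collapse_descend ij (leqnn p))].
Qed.

End Lij.

Theorem lemma5 (p q n : nat) (i j : 'I_p.+1) :
  3 <= p -> p <= q -> i != j ->
  exists S : pred {set atom q n},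
    @is_subalgebra q n S /\
    exists f : {set atom p n} -> {set atom q n},
      @is_iso_between p q n (@Lij p n i j) S f.
Proof.
move=> _ pq ij; pose f (X : {set atom p n}) := @collapse p n i j q @^-1: X.
suff [S [subS isoS]] : exists S, is_subalgebra S /\ is_iso_between (@Lij p n i j) S f.
  by exists S; split => //; exists f.
apply: iso_onto_image.
- exact: Lij_subalgebra.
- move=> X Y /Lij_saturated satX /Lij_saturated satY; apply: preim_inj satX satY => x.
  by exists (embed pq x); rewrite collapse_embed rep_collapse.
- by apply/setP => -[[m|k]|]; rewrite !inE.
- by move=> X Y _ _; rewrite /f preimsetU.
- by move=> X _; rewrite /f preimsetC.
- move=> X Y /Lij_saturated satX /Lij_saturated satY.
  by apply: preim_Lcomp satX satY; [exact: collapse_lift | exact: collapse_descend].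
Qed.
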